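(* Let $A, C, D$ be binary random variables, with $A$ taking values $a,\overline{a}$, $C$ taking values $c,\overline{c}$, $D$ taking values $d,\overline{d}$, and let $Y$ be a real random variable with finite expectation. Suppose the joint distribution factorizes as \[ p(A,C,D,Y)=p(C)\,p(D\mid C)\,p(A\mid C)\,p(Y\mid A,C), \] and that every event $\{A=x, C=y, D=z\}$ has positive probability. Let $p(c)=0.5$, $p(d\mid c)=p(\overline{d}\mid\overline{c})\ge 0.5$ and $p(\overline{a}\mid\overline{c})\ge p(a\mid c)\ge 0.5$. If \[ E[Y|a,c]-E[Y|a,\overline{c}]\ \ge\ E[Y|\overline{a},\overline{c}]-E[Y|\overline{a},c]\ \ge\ 0, \] then $RD_{crude}\ge RD_{true}$ and $RD_{obs}\ge RD_{true}$.
   Context: $RD_{true}=E[Y|a,c]p(c)+E[Y|a,\overline{c}]p(\overline{c})-E[Y|\overline{a},c]p(c)-E[Y|\overline{a},\overline{c}]p(\overline{c})$; $RD_{crude}=E[Y|a]-E[Y|\overline{a}]$; $RD_{obs}=E[Y|a,d]p(d)+E[Y|a,\overline{d}]p(\overline{d})-E[Y|\overline{a},d]p(d)-E[Y|\overline{a},\overline{d}]p(\overline{d})$. *)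

From HB Require Import structures.
From mathcomp Require Import all_boot all_order all_algebra.
From mathcomp Require Import all_classical all_reals all_analysis.
Set Implicit Arguments. Unset Strict Implicit. Unset Printing Implicit Defensive.
Import Order.TTheory GRing.Theory Num.Theory.
Local Open Scope classical_set_scope.
Local Open Scope ring_scope.

Section Defs.
Context (d : measure_display) (T : measurableType d) (R : realType)
  (P : probability T R).

Definition prob (B : set T) : R := fine (P B).

Definition ev (X : T -> bool) (x : bool) : set T := [set t | X t = x].

Definition cprob (B G : set T) : R := prob (B `&` G) / prob G.

Definition cexp (Y : T -> R) (B : set T) : R :=
  fine (\int[P]_(t in B) (Y t)%:E) / prob B.

(* Convention: value a = true, abar = false (likewise for C and D). *)
Definition RD_true (A C : T -> bool) (Y : T -> R) : R :=
  cexp Y (ev A true `&` ev C true) * prob (ev C true)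
  + cexp Y (ev A true `&` ev C false) * prob (ev C false)
  - cexp Y (ev A false `&` ev C true) * prob (ev C true)
  - cexp Y (ev A false `&` ev C false) * prob (ev C false).

Definition RD_crude (A : T -> bool) (Y : T -> R) : R :=
  cexp Y (ev A true) - cexp Y (ev A false).

Definition RD_obs (A D : T -> bool) (Y : T -> R) : R :=
  cexp Y (ev A true `&` ev D true) * prob (ev D true)
  + cexp Y (ev A true `&` ev D false) * prob (ev D false)
  - cexp Y (ev A false `&` ev D true) * prob (ev D true)
  - cexp Y (ev A false `&` ev D false) * prob (ev D false).

End Defs.

(* With p(c) = 1/2, RD_true is the midpoint contrast
   (E[Y|a,c] + E[Y|a,~c] - E[Y|~a,c] - E[Y|~a,~c]) / 2.  Each of E[Y|a],
   E[Y|~a] is a weighted mean of the two stratum means E[Y|x,c], E[Y|x,~c]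
   (weights proportional to p(x|c) and p(x|~c)), and, because Y is
   independent of D given (A, C), so is each E[Y|x,d] (weights proportional
   to p(d|c) p(x|c) and p(d|~c) p(x|~c)).  A weighted mean with weights s, t
   is the midpoint plus (s - t) / (2 (s + t)) times the difference, so both
   RD_crude - RD_true and RD_obs - RD_true take the form
   k (E[Y|a,c] - E[Y|a,~c]) + k' (E[Y|~a,~c] - E[Y|~a,c]), which is
   nonnegative because the first difference dominates the second, the second
   is nonnegative, k >= 0 and k + k' >= 0; these two signs are explicit
   rational inequalities in p(a|c), p(~a|~c) and p(d|c). *)

From HB Require Import structures.
From mathcomp Require Import all_boot all_order all_algebra.
From mathcomp Require Import all_classical all_reals all_analysis measurable_realfun.
From mathcomp Require Import ring lra.
Import Order.TTheory GRing.Theory Num.Theory.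
Local Open Scope classical_set_scope.
Local Open Scope ring_scope.

Section weighted_mean.
Context {R : realFieldType}.
Implicit Types a b e s t x y : R.

Definition wmean s t x y := (s * x + t * y) / (s + t).

Definition wskew s t := (s - t) / (2 * (s + t)).

Lemma wmeanE s t x y :
  s + t != 0 -> wmean s t x y = (x + y) / 2 + wskew s t * (x - y).
Proof. by move=> st0; rewrite /wmean /wskew; field. Qed.

Lemma wmeanZ c s t x y : c != 0 -> wmean (c * s) (c * t) x y = wmean s t x y.
Proof.
move=> c0; rewrite /wmean -!mulrA -mulrDr -mulrDr.
have [->|st0] := eqVneq (s + t) 0; first by rewrite mulr0 !invr0 !mulr0.
by rewrite invfM mulrACA divff // mul1r.
Qed.

Lemma lin_comb_ge0 k k' x z :
  0 <= z -> z <= x -> 0 <= k -> 0 <= k + k' -> 0 <= k * x + k' * z.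
Proof. by move=> z0 zx k0 kk0; nra. Qed.

Lemma wskew_crude_ge0 a b : 1 / 2 <= a -> a <= b -> b < 1 ->
  0 <= wskew a (1 - b) /\ 0 <= wskew a (1 - b) + wskew (1 - a) b.
Proof.
move=> ha hab hb; have p1 : 0 < a + (1 - b) by lra.
have p0 : 0 < (1 - a) + b by lra.
have -> : wskew a (1 - b) + wskew (1 - a) b
          = (a + b - 1) * (b - a) / ((a + (1 - b)) * ((1 - a) + b)).
  by rewrite /wskew; field; rewrite !gt_eqF.
split; rewrite ?/wskew divr_ge0 ?mulr_ge0 //; lra.
Qed.

Lemma wskew_obs_ge0 a b e : 1 / 2 <= a -> a <= b -> b < 1 -> 0 < e -> e < 1 ->
  let k1 := wskew (e * a) ((1 - e) * (1 - b)) + wskew ((1 - e) * a) (e * (1 - b)) in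
  let k0 := wskew (e * (1 - a)) ((1 - e) * b) + wskew ((1 - e) * (1 - a)) (e * b) in
  0 <= k1 /\ 0 <= k1 + k0.
Proof.
move=> ha hab hb e0 e1 k1 k0.
have p1 : 0 < e * a + (1 - e) * (1 - b) by nra.
have p2 : 0 < (1 - e) * a + e * (1 - b) by nra.
have p3 : 0 < e * (1 - a) + (1 - e) * b by nra.
have p4 : 0 < (1 - e) * (1 - a) + e * b by nra.
have ee : 0 <= e * (1 - e) by nra.
have -> : k1 + k0 = e * (1 - e) * ((a + b - 1) * (b - a) / 2)
    * ((a + 1 - b) * (1 + b - a) + (1 - 2 * e) ^+ 2 * (a + b - 1) ^+ 2)
    / ((e * a + (1 - e) * (1 - b)) * ((1 - e) * a + e * (1 - b))
       * ((e * (1 - a) + (1 - e) * b) * ((1 - e) * (1 - a) + e * b))).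
  by rewrite /k1 /k0 /wskew; field; rewrite !gt_eqF.
have -> : k1 = e * (1 - e) * ((a + b - 1) * (a + 1 - b))
               / ((e * a + (1 - e) * (1 - b)) * ((1 - e) * a + e * (1 - b))).
  by rewrite /k1 /wskew; field; rewrite !gt_eqF.
have ab1 : 0 <= a + b - 1 by lra.
split; apply: divr_ge0.
- by rewrite mulr_ge0 // mulr_ge0 //; lra.
- by apply/ltW; rewrite !mulr_gt0.
- apply: mulr_ge0; first by rewrite mulr_ge0 // divr_ge0 // mulr_ge0 //; lra.
  apply: addr_ge0; first by apply: mulr_ge0; lra.
  by rewrite mulr_ge0 ?sqr_ge0.
- by apply/ltW; rewrite !mulr_gt0.
Qed.

Lemma wmean_diff_ge_midpoint a b x1 y1 x0 y0 :
  1 / 2 <= a -> a <= b -> b < 1 -> 0 <= y0 - x0 -> y0 - x0 <= x1 - y1 ->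
  (x1 + y1 - x0 - y0) / 2 <= wmean a (1 - b) x1 y1 - wmean (1 - a) b x0 y0.
Proof.
move=> ha hab hb h0 h01.
rewrite !wmeanE ?lt0r_neq0; [|lra..].
have [k1 k10] := wskew_crude_ge0 _ _ ha hab hb.
have := lin_comb_ge0 _ _ _ _ h0 h01 k1 k10; lra.
Qed.

Lemma wmean_diff_avg_ge_midpoint a b e x1 y1 x0 y0 :
  1 / 2 <= a -> a <= b -> b < 1 -> 0 < e -> e < 1 ->
  0 <= y0 - x0 -> y0 - x0 <= x1 - y1 ->
  (x1 + y1 - x0 - y0) / 2 <=
  (wmean (e * a) ((1 - e) * (1 - b)) x1 y1 - wmean (e * (1 - a)) ((1 - e) * b) x0 y0
   + (wmean ((1 - e) * a) (e * (1 - b)) x1 y1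
      - wmean ((1 - e) * (1 - a)) (e * b) x0 y0)) / 2.
Proof.
move=> ha hab hb e0 e1 h0 h01.
rewrite !wmeanE ?lt0r_neq0; [|nra..].
have [k1 k10] := wskew_obs_ge0 _ _ _ ha hab hb e0 e1.
have := lin_comb_ge0 _ _ _ _ h0 h01 k1 k10; lra.
Qed.

End weighted_mean.

Section restriction_and_scaling.
Context d (T : measurableType d) (R : realType).
Local Open Scope ereal_scope.

Lemma integral_mrestr (m : {measure set T -> \bar R}) (B : set T)
    (mB : measurable B) (f : T -> \bar R) : measurable_fun [set: T] f ->
  \int[mrestr m mB]_x f x = \int[m]_(x in B) f x.
Proof.
move=> mf; rewrite -(setUv B) integral_setU //; last 3 first.
- exact: measurableC.
- by rewrite setUv.
- by rewrite /disj_set setICr.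
rewrite (eq_measure_integral (D := B) m); last first.
  by move=> X _ XB; transitivity (m (X `&` B)); last rewrite setIidl.
rewrite (eq_measure_integral (D := ~` B) mzero) ?integral_measure_zero ?adde0 //.
move=> X _ /subsets_disjoint; rewrite setCK => XB0.
by transitivity (m (X `&` B)); last rewrite XB0 measure0.
Qed.

Lemma integral_mscale (m : {measure set T -> \bar R}) (k : {nonneg R})
    (D : set T) (f : T -> \bar R) : measurable D -> m.-integrable D f ->
  \int[mscale k m]_(x in D) f x = k%:num%:E * \int[m]_(x in D) f x.
Proof.
move=> mD intf; have mf := measurable_int m intf.
rewrite [LHS]integralE [in RHS]integralE.
rewrite (ge0_integral_mscale m mD k (measurable_funepos mf)) //.
rewrite (ge0_integral_mscale m mD k (measurable_funeneg mf)) //.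
rewrite -muleBr //; apply: fin_num_adde_defl.
by rewrite fin_numN integrable_neg_fin_num.
Qed.

End restriction_and_scaling.
Arguments integral_mrestr {d T R m B} mB {f}.

Section events_and_conditional_expectation.
Context {d : measure_display} {T : measurableType d} {R : realType}.
Context (P : probability T R) {X : T -> bool} {Y : T -> R}.
Hypotheses (mX : forall x, measurable (ev X x)) (mY : measurable_fun setT Y)
  (iY : P.-integrable setT (fun t => (Y t)%:E)).
Implicit Types B G : set T.

Lemma probE B : measurable B -> P B = (prob P B)%:E.
Proof. by move=> mB; rewrite /prob fineK // fin_num_measure. Qed.

Lemma prob_le B1 B2 : measurable B1 -> measurable B2 -> B1 `<=` B2 ->
  prob P B1 <= prob P B2.
Proof.
by move=> mB1 mB2 B12; rewrite -lee_fin -!probE // le_measure // inE.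
Qed.

Lemma prob_setT : prob P setT = 1.
Proof. by rewrite /prob probability_setT. Qed.

Lemma setI_evU B : B = (B `&` ev X true) `|` (B `&` ev X false).
Proof.
apply/seteqP; split => [t Bt|t [[]|[]] //].
by rewrite /ev /=; case: (X t); [left|right].
Qed.

Lemma setI_evI B : (B `&` ev X true) `&` (B `&` ev X false) = set0.
Proof. by apply/seteqP; split => // t [[_ Xt] [_]]; rewrite /ev /= Xt. Qed.

Lemma prob_split B : measurable B ->
  prob P B = prob P (B `&` ev X true) + prob P (B `&` ev X false).
Proof.
move=> mB; have mBX x : measurable (B `&` ev X x) by exact: measurableI.
by rewrite {1}(setI_evU B) /prob measureU ?setI_evI // fineD ?fin_num_measure.
Qed.

Lemma prob_evF : prob P (ev X false) = 1 - prob P (ev X true).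
Proof. by rewrite -prob_setT (prob_split _ measurableT) !setTI addrC addKr. Qed.

Lemma cprob_evF G : measurable G -> prob P G != 0 ->
  cprob P (ev X false) G = 1 - cprob P (ev X true) G.
Proof.
move=> mG G0; rewrite /cprob -(divff G0) -mulrBl; congr (_ / _).
by rewrite (prob_split _ mG) !(setIC G) addrC addKr.
Qed.

Lemma cprob_setT G : prob P G != 0 -> cprob P setT G = 1.
Proof. by move=> G0; rewrite /cprob setTI divff. Qed.

Lemma cprob_evT G : measurable G -> prob P G != 0 ->
  cprob P (ev X true) G = 1 - cprob P (ev X false) G.
Proof. by move=> mG G0; rewrite cprob_evF // subKr. Qed.

Lemma cprob_ev_lt1 x G : measurable G -> prob P G != 0 ->
  0 < cprob P (ev X (~~ x)) G -> cprob P (ev X x) G < 1.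
Proof.
by move=> mG G0; case: x => /=; [rewrite cprob_evF | rewrite cprob_evT] => //; lra.
Qed.

Lemma prob_total B : measurable B -> (forall x, prob P (ev X x) != 0) ->
  prob P B = cprob P B (ev X true) * prob P (ev X true)
             + cprob P B (ev X false) * prob P (ev X false).
Proof. by move=> mB X0; rewrite /cprob !divfK // -prob_split. Qed.

Lemma integral_fin_num B : measurable B ->
  (\int[P]_(t in B) (Y t)%:E)%E \is a fin_num.
Proof.
move=> mB; apply: integrable_fin_num => //.
exact: integrableS measurableT mB (subsetT _) iY.
Qed.

Lemma integral_split B : measurable B ->
  fine (\int[P]_(t in B) (Y t)%:E) =
  fine (\int[P]_(t in B `&` ev X true) (Y t)%:E)
  + fine (\int[P]_(t in B `&` ev X false) (Y t)%:E).
Proof.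
move=> mB; have mBX x : measurable (B `&` ev X x) by exact: measurableI.
rewrite {1}(setI_evU B) integral_setU //; last 2 first.
- by apply: measurable_funTS; exact/measurable_EFinP.
- by rewrite /disj_set setI_evI.
by rewrite fineD // integral_fin_num.
Qed.

Lemma fine_integral_cexp B : prob P B != 0 ->
  fine (\int[P]_(t in B) (Y t)%:E) = cexp P Y B * prob P B.
Proof. by move=> B0; rewrite /cexp divfK. Qed.

Lemma cexp_split B : measurable B ->
  prob P (B `&` ev X true) != 0 -> prob P (B `&` ev X false) != 0 ->
  cexp P Y B = wmean (prob P (B `&` ev X true)) (prob P (B `&` ev X false))
                     (cexp P Y (B `&` ev X true)) (cexp P Y (B `&` ev X false)).
Proof.
move=> mB B1 B0; rewrite {1}/cexp integral_split // !fine_integral_cexp //.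
by rewrite /wmean -prob_split // ![cexp _ _ _ * _]mulrC.
Qed.

Lemma integral_scaled_law B1 B2 c : measurable B1 -> measurable B2 -> 0 <= c ->
  (forall S, measurable S ->
     P (B1 `&` Y @^-1` S) = (c%:E * P (B2 `&` Y @^-1` S))%E) ->
  (\int[P]_(t in B1) (Y t)%:E = c%:E * \int[P]_(t in B2) (Y t)%:E)%E.
Proof.
move=> mB1 mB2 c0 B12.
have mEY : measurable_fun setT (fun t => (Y t)%:E) by exact/measurable_EFinP.
have int_mrestr B (mB : measurable B) :
    (mrestr P mB).-integrable (Y @^-1` setT) (EFin \o Y).
  apply/integrableP; split => //; rewrite (integral_mrestr mB); last first.
    exact: measurableT_comp.
  by have /integrableP[] := integrableS measurableT mB (subsetT B) iY.
have law B (mB : measurable B) : (\int[P]_(t in B) (Y t)%:E =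
    \int[pushforward (mrestr P mB) Y]_y y%:E)%E.
  rewrite -(integral_mrestr mB mEY).
  by rewrite (integral_pushforward mY _ (int_mrestr B mB)).
rewrite (law _ mB1) (law _ mB2).
rewrite (eq_measure_integral (mscale (NngNum c0) (pushforward (mrestr P mB2) Y))).
  rewrite integral_mscale //; apply: integrable_pushforward => //; exact: int_mrestr.
by move=> S mS _; rewrite /= /mscale /pushforward /mrestr /= setIC B12 // setIC.
Qed.

Lemma cexp_scaled_law B1 B2 c : measurable B1 -> measurable B2 -> 0 < c ->
  (forall S, measurable S ->
     prob P (B1 `&` Y @^-1` S) = c * prob P (B2 `&` Y @^-1` S)) ->
  cexp P Y B1 = cexp P Y B2.
Proof.
move=> mB1 mB2 c0 B12.
have mYS S : measurable S -> measurable (Y @^-1` S).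
  by move=> mS; rewrite -[Y @^-1` S]setTI; exact: mY.
rewrite /cexp (integral_scaled_law _ _ _ mB1 mB2 (ltW c0)); last first.
  move=> S mS; have mBS B : measurable B -> measurable (B `&` Y @^-1` S).
    by move=> mB; exact: measurableI (mYS _ mS).
  by rewrite !probE; [rewrite (B12 S mS) EFinM|exact: mBS..].
have := B12 setT measurableT; rewrite preimage_setT !setIT => pB1.
by rewrite [X in _ / X]pB1 fineM ?integral_fin_num // -mulf_div divff ?gt_eqF ?mul1r.
Qed.

End events_and_conditional_expectation.

Section confounder_model.
Context {d : measure_display} {T : measurableType d} {R : realType}.
Context (P : probability T R) {A C D : T -> bool} {Y : T -> R}.
Hypotheses (mA : forall x, measurable (ev A x))
  (mC : forall x, measurable (ev C x)) (mD : forall x, measurable (ev D x))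
  (mY : measurable_fun setT Y) (iY : P.-integrable setT (fun t => (Y t)%:E)).
Hypothesis fact : forall (x y z : bool) (S : set R), measurable S ->
  prob P (ev A x `&` ev C y `&` ev D z `&` (Y @^-1` S)) =
  prob P (ev C y) * cprob P (ev D z) (ev C y) * cprob P (ev A x) (ev C y)
    * cprob P (Y @^-1` S) (ev A x `&` ev C y).
Hypothesis pos : forall x y z : bool, 0 < prob P (ev A x `&` ev C y `&` ev D z).
Hypothesis pc : prob P (ev C true) = 1 / 2.

Let mAC x y : measurable (ev A x `&` ev C y) := measurableI _ _ (mA x) (mC y).
Let mACD x y z : measurable (ev A x `&` ev C y `&` ev D z) :=
  measurableI _ _ (mAC x y) (mD z).

Lemma prob_AC_gt0 x y : 0 < prob P (ev A x `&` ev C y).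
Proof. by apply: lt_le_trans (pos x y true) _; apply: prob_le => // t []. Qed.

Lemma prob_C_gt0 y : 0 < prob P (ev C y).
Proof. by apply: lt_le_trans (prob_AC_gt0 true y) _; apply: prob_le => // t []. Qed.

Let C0 y : prob P (ev C y) != 0 := lt0r_neq0 (prob_C_gt0 y).

Lemma prob_C y : prob P (ev C y) = 1 / 2.
Proof. by case: y; rewrite ?(prob_evF P mC) pc //; lra. Qed.

Lemma prob_AC x y : prob P (ev A x `&` ev C y) = 1 / 2 * cprob P (ev A x) (ev C y).
Proof. by rewrite /cprob prob_C mulrC divfK // gt_eqF. Qed.

Lemma prob_ACD x y z : prob P (ev A x `&` ev C y `&` ev D z) =
  prob P (ev C y) * cprob P (ev D z) (ev C y) * cprob P (ev A x) (ev C y).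
Proof.
have := fact x y z setT measurableT; rewrite preimage_setT setIT => ->.
by rewrite cprob_setT ?gt_eqF ?prob_AC_gt0 // mulr1.
Qed.

Lemma prob_ADC x y z : prob P (ev A x `&` ev D z `&` ev C y) =
  1 / 2 * (cprob P (ev D z) (ev C y) * cprob P (ev A x) (ev C y)).
Proof. by rewrite setIAC prob_ACD prob_C [RHS]mulrA. Qed.

Lemma cexp_ADC x y z :
  cexp P Y (ev A x `&` ev D z `&` ev C y) = cexp P Y (ev A x `&` ev C y).
Proof.
have c0 := divr_gt0 (pos x y z) (prob_AC_gt0 x y).
rewrite setIAC (cexp_scaled_law P mY iY _ _ _ (mACD x y z) (mAC x y) c0) //.
move=> S mS; rewrite fact // -prob_ACD [cprob _ (Y @^-1` S) _]/cprob.
by rewrite (setIC (Y @^-1` S)) mulrA [LHS]mulrAC.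
Qed.

Hypothesis pd1 : cprob P (ev D true) (ev C true) = cprob P (ev D false) (ev C false).
Hypothesis pd2 : 1 / 2 <= cprob P (ev D true) (ev C true).
Hypothesis pa1 : cprob P (ev A true) (ev C true) <= cprob P (ev A false) (ev C false).
Hypothesis pa2 : 1 / 2 <= cprob P (ev A true) (ev C true).
Hypothesis hE1 :
  cexp P Y (ev A false `&` ev C false) - cexp P Y (ev A false `&` ev C true)
  <= cexp P Y (ev A true `&` ev C true) - cexp P Y (ev A true `&` ev C false).
Hypothesis hE2 :
  0 <= cexp P Y (ev A false `&` ev C false) - cexp P Y (ev A false `&` ev C true).

Lemma cprob_AC_gt0 x y : 0 < cprob P (ev A x) (ev C y).
Proof. by rewrite divr_gt0 ?prob_AC_gt0 ?prob_C_gt0. Qed.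

Lemma cprob_DC_gt0 z y : 0 < cprob P (ev D z) (ev C y).
Proof.
rewrite divr_gt0 ?prob_C_gt0 //; apply: lt_le_trans (pos true y z) _.
apply: prob_le => [||t [[_ ?] ?]] //; exact: measurableI.
Qed.

Lemma prob_D z : prob P (ev D z) = 1 / 2.
Proof.
have pD1 : prob P (ev D true) = 1 / 2.
  rewrite (prob_total P mC _ (mD true) C0) !prob_C.
  rewrite (cprob_evT P mD _ (mC false) (C0 false)) -pd1; lra.
by case: z; rewrite ?(prob_evF P mD) pD1 //; lra.
Qed.

Lemma RD_true_midpoint : RD_true P A C Y =
  (cexp P Y (ev A true `&` ev C true) + cexp P Y (ev A true `&` ev C false)
   - cexp P Y (ev A false `&` ev C true) - cexp P Y (ev A false `&` ev C false)) / 2.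
Proof. by rewrite /RD_true !prob_C; lra. Qed.

Lemma RD_crude_wmean : RD_crude P A Y =
  wmean (cprob P (ev A true) (ev C true)) (1 - cprob P (ev A false) (ev C false))
    (cexp P Y (ev A true `&` ev C true)) (cexp P Y (ev A true `&` ev C false))
  - wmean (1 - cprob P (ev A true) (ev C true)) (cprob P (ev A false) (ev C false))
    (cexp P Y (ev A false `&` ev C true)) (cexp P Y (ev A false `&` ev C false)).
Proof.
rewrite /RD_crude !(cexp_split P mC mY iY _ (mA _)) ?gt_eqF ?prob_AC_gt0 //.
rewrite !prob_AC !wmeanZ // (cprob_evF P mA _ (mC true)) //.
by rewrite (cprob_evT P mA _ (mC false)).
Qed.

Lemma cexp_AD_wmean x z : cexp P Y (ev A x `&` ev D z) =
  wmean (cprob P (ev D z) (ev C true) * cprob P (ev A x) (ev C true))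
        (cprob P (ev D z) (ev C false) * cprob P (ev A x) (ev C false))
        (cexp P Y (ev A x `&` ev C true)) (cexp P Y (ev A x `&` ev C false)).
Proof.
have ADC_gt0 y : prob P (ev A x `&` ev D z `&` ev C y) != 0.
  by rewrite gt_eqF // setIAC.
rewrite (cexp_split P mC mY iY _ (measurableI _ _ (mA x) (mD z))) //.
by rewrite !prob_ADC !cexp_ADC wmeanZ.
Qed.

Lemma RD_true_le_crude : RD_true P A C Y <= RD_crude P A Y.
Proof.
have b1 := cprob_ev_lt1 P mA false _ (mC false) (C0 false) (cprob_AC_gt0 true false).
by rewrite RD_true_midpoint RD_crude_wmean wmean_diff_ge_midpoint.
Qed.

Lemma RD_true_le_obs : RD_true P A C Y <= RD_obs P A D Y.
Proof.
have b1 := cprob_ev_lt1 P mA false _ (mC false) (C0 false) (cprob_AC_gt0 true false).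
have e1 := cprob_ev_lt1 P mD true _ (mC true) (C0 true) (cprob_DC_gt0 false true).
have e0 : 0 < cprob P (ev D true) (ev C true) by apply: lt_le_trans pd2; lra.
rewrite RD_true_midpoint /RD_obs !cexp_AD_wmean !prob_D.
rewrite (cprob_evF P mD _ (mC true)) // (cprob_evT P mD _ (mC false)) // -pd1.
rewrite (cprob_evF P mA _ (mC true)) // (cprob_evT P mA _ (mC false)) //.
have := wmean_diff_avg_ge_midpoint _ _ _ _ _ _ _ pa2 pa1 b1 e0 e1 hE2 hE1; lra.
Qed.

End confounder_model.

Theorem theorem4 (d : measure_display) (T : measurableType d) (R : realType)
  (P : probability T R) (A C D : T -> bool) (Y : T -> R)
  (mA : forall x, measurable (ev A x))
  (mC : forall x, measurable (ev C x))
  (mD : forall x, measurable (ev D x))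
  (mY : measurable_fun setT Y)
  (iY : P.-integrable setT (fun t => (Y t)%:E))
  (* factorization p(A,C,D,Y) = p(C) p(D|C) p(A|C) p(Y|A,C) *)
  (fact : forall (x y z : bool) (S : set R), measurable S ->
     prob P (ev A x `&` ev C y `&` ev D z `&` (Y @^-1` S)) =
     prob P (ev C y) * cprob P (ev D z) (ev C y) * cprob P (ev A x) (ev C y)
       * cprob P (Y @^-1` S) (ev A x `&` ev C y))
  (pos : forall x y z : bool, 0 < prob P (ev A x `&` ev C y `&` ev D z))
  (pc : prob P (ev C true) = 1 / 2)
  (pd1 : cprob P (ev D true) (ev C true) = cprob P (ev D false) (ev C false))
  (pd2 : 1 / 2 <= cprob P (ev D true) (ev C true))
  (pa1 : cprob P (ev A true) (ev C true) <= cprob P (ev A false) (ev C false))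
  (pa2 : 1 / 2 <= cprob P (ev A true) (ev C true))
  (hE1 : cexp P Y (ev A false `&` ev C false) - cexp P Y (ev A false `&` ev C true)
         <= cexp P Y (ev A true `&` ev C true) - cexp P Y (ev A true `&` ev C false))
  (hE2 : 0 <= cexp P Y (ev A false `&` ev C false) - cexp P Y (ev A false `&` ev C true)) :
  RD_true P A C Y <= RD_crude P A Y /\ RD_true P A C Y <= RD_obs P A D Y.
Proof.
split; first exact: RD_true_le_crude mA mC mD mY iY pos pc pa1 pa2 hE1 hE2.
exact: RD_true_le_obs mA mC mD mY iY fact pos pc pd1 pd2 pa1 pa2 hE1 hE2.
Qed.
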